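(* Let $a,d$ be real numbers, let $A_{n,k}(a,d)$ be the general Eulerian numbers and $T_n(t,a,d)$ the general Eulerian polynomials defined below, and let $A_j(t)$ be the classical Eulerian polynomials defined below. Then for every integer $n\ge 0$, $$T_n(t,a,d)=\sum_{k=-1}^{n-1}A_{n,k}(a,d)t^{k+1}=\sum_{j=0}^n\binom{n}{j}d^jA_j(t)(at-a)^{n-j}.$$
   Context: For real numbers $a,d$, the general Eulerian numbers $A_{n,k}(a,d)$ (integers $n\ge 0$, $k$) are defined by $A_{0,-1}(a,d)=1$, $A_{n,k}(a,d)=0$ whenever $k\ge n$ or $k\le -2$, and for $n\ge 1$, $-1\le k\le n-1$: $$A_{n,k}(a,d)=(-a+(k+2)d)A_{n-1,k}(a,d)+(a+(n-k-1)d)A_{n-1,k-1}(a,d).$$ The general Eulerian polynomials are $T_n(t,a,d)=\sum_{k=-1}^{n-1}A_{n,k}(a,d)t^{k+1}$ (so $T_0(t,a,d)=1$). The classical Eulerian polynomials are defined by $A_0(t)=1$ and $A_n(t)=\sum_{k=0}^{n-1}\binom{n}{k}A_k(t)(t-1)^{n-1-k}$ for $n\ge 1$. Also $x^0=1$ for all $x$. *)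

From mathcomp Require Import all_boot all_order all_algebra.
From mathcomp Require Import reals.
Set Implicit Arguments. Unset Strict Implicit. Unset Printing Implicit Defensive.
Import Order.TTheory GRing.Theory Num.Theory.
Local Open Scope ring_scope.

Fixpoint genEuler (R : ringType) (a d : R) (n : nat) (k : int) : R :=
  match n with
  | 0%N => if k == (-1)%R then 1 else 0
  | n'.+1 =>
      if ((-1)%R <= k) && (k <= (n' : int)) then
        (- a + (k + 2)%:~R * d) * genEuler a d n' k
        + (a + ((n : int) - k - 1)%:~R * d) * genEuler a d n' (k - 1)
      else 0
  end.

(* General Eulerian polynomial T_n(t,a,d) = sum_{k=-1}^{n-1} A_{n,k} t^{k+1};
   the index m = k+1 ranges over 0..n. *)
Definition genEulerPoly (R : ringType) (a d : R) (n : nat) : {poly R} :=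
  \sum_(m < n.+1) (genEuler a d n (m%:Z - 1)) *: 'X^m.

Fixpoint eulerPolys (R : ringType) (n : nat) : seq {poly R} :=
  match n with
  | 0%N => [:: 1]
  | n'.+1 =>
      let s := eulerPolys R n' in
      rcons s (\sum_(k < n'.+1) ('C(n'.+1, k))%:R * nth 0 s k * ('X - 1) ^+ (n' - k))
  end.

Definition eulerPoly (R : ringType) (n : nat) : {poly R} := nth 0 (eulerPolys R n) n.

From mathcomp Require Import all_boot all_order all_algebra.
From mathcomp Require Import reals.
From mathcomp Require Import ring zify.
Set Implicit Arguments. Unset Strict Implicit. Unset Printing Implicit Defensive.
Import Order.TTheory GRing.Theory Num.Theory.
Local Open Scope ring_scope.

(* Both sides satisfy T_(n+1) = (a (t - 1) + d + n d t) T_n + d t (1 - t) T_n'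
   with T_0 = 1.  For the left side this is the defining recurrence of
   A_(n,k) read off coefficientwise.  For the binomial sum it follows from
   Pascal's rule and the derivative recurrence
   A_(j+1) = (1 + j t) A_j + t (1 - t) A_j' of the Eulerian polynomials, which
   in turn comes from the case a = d = 1, where the binomial sum at n + 1 is
   t A_(n+1)(t) and the defining sum of A_(n+1) is (t A_(n+1) - A_(n+1))/(t - 1). *)

Lemma sum_mulrn_binS (V : zmodType) (n : nat) (f : nat -> V) :
  \sum_(j < n.+2) f j *+ 'C(n.+1, j) =
  \sum_(j < n.+1) f j *+ 'C(n, j) + \sum_(j < n.+1) f j.+1 *+ 'C(n, j).
Proof.
rewrite big_ord_recl /= bin0.
under eq_bigr => j _ do rewrite /bump /= binS mulrnDr.
rewrite big_split /= addrA; congr (_ + _).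
rewrite [in RHS]big_ord_recl bin0 /=; congr (_ + _).
rewrite big_ord_recr /= bin_small // mulr0n addr0.
by apply: eq_bigr => j _.
Qed.

Lemma coef_mulX_deriv (R : nzRingType) (p : {poly R}) m :
  ('X * p^`())`_m = p`_m *+ m.
Proof. by case: m => [|m]; rewrite coefXM ?mulr0n // coef_deriv. Qed.

Definition euler_recurrence (R : comNzRingType) (P : nat -> {poly R}) :=
  forall j, P j.+1 = (1 + j%:R *: 'X) * P j + 'X * (1 - 'X) * (P j)^`().

Section BinomialTransform.
Variables (R : comNzRingType) (a d : R).

Let x : {poly R} := a *: 'X - a%:P.

Definition binom_transform (P : nat -> {poly R}) n :=
  \sum_(j < n.+1) 'C(n, j)%:R *: (d ^+ j *: (P j * x ^+ (n - j))).

Lemma binom_transform0 (P : nat -> {poly R}) : binom_transform P 0 = P 0%N.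
Proof. by rewrite /binom_transform big_ord1 bin0 !scale1r expr0 mulr1. Qed.

(* Since [x = a ('X - 1)], differentiating a power of [x] only rescales it. *)
Lemma mulX1BX_deriv_exp k :
  'X * (1 - 'X) * (x ^+ k)^`() = - (k%:R *: ('X * x ^+ k)).
Proof.
rewrite deriv_exp /x derivB derivZ derivX derivC subr0 alg_polyC.
case: k => [|k]; first by rewrite mulr0n scale0r oppr0 mulr0.
by rewrite /= exprS -!mul_polyC; ring.
Qed.

Lemma binom_transform_rec (P : nat -> {poly R}) n : euler_recurrence P ->
  binom_transform P n.+1 =
  (x + d%:P + (n%:R * d) *: 'X) * binom_transform P n
  + d *: ('X * (1 - 'X) * (binom_transform P n)^`()).
Proof.
move=> recP; rewrite /binom_transform.
under eq_bigr => j _ do rewrite scaler_nat.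
rewrite (sum_mulrn_binS _ (fun j => d ^+ j *: (P j * x ^+ (n.+1 - j)))).
rewrite raddf_sum !mulr_sumr scaler_sumr -!big_split /=.
apply: eq_bigr => -[j /= ltjn] _.
rewrite !derivZ derivM -!scalerAr (mulrDr (_ * _)) ['X * (1 - 'X) * (P j * _)]mulrCA.
rewrite mulX1BX_deriv_exp recP.
have [k ->] : exists k, n = (j + k)%N by exists (n - j)%N; lia.
have -> : ((j + k).+1 - j = k.+1)%N by lia.
have -> : ((j + k).+1 - j.+1 = k)%N by lia.
have -> : ((j + k) - j = k)%N by lia.
by rewrite natrD !exprS !scaler_nat /x -!mul_polyC; ring.
Qed.

End BinomialTransform.

Fixpoint euler_deriv_poly (R : comNzRingType) (n : nat) : {poly R} :=
  if n is n'.+1 then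
    (1 + n'%:R *: 'X) * euler_deriv_poly R n'
    + 'X * (1 - 'X) * (euler_deriv_poly R n')^`()
  else 1.

Lemma euler_deriv_polyS (R : comNzRingType) :
  euler_recurrence (euler_deriv_poly R).
Proof. by []. Qed.
Arguments euler_deriv_poly : simpl never.

(* With [a = d = 1] the recurrence of [binom_transform] and the one defining
   [euler_deriv_poly] differ exactly by the factor ['X]. *)
Lemma binom_transform_euler_deriv_poly (R : comNzRingType) n :
  binom_transform 1 1 (euler_deriv_poly R) n.+1 = 'X * euler_deriv_poly R n.+1.
Proof.
have recE := euler_deriv_polyS R.
elim: n => [|n IH]; rewrite binom_transform_rec //.
  by rewrite binom_transform0 recE [euler_deriv_poly R 0]/= derivC -!mul_polyC; ring.
by rewrite IH derivM derivX (recE n.+1) -!mul_polyC; ring.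
Qed.

Lemma size_eulerPolys (R : nzRingType) n : size (eulerPolys R n) = n.+1.
Proof. by elim: n => [|n IH] //=; rewrite size_rcons IH. Qed.

Lemma nth_eulerPolys (R : nzRingType) n k :
  (k <= n)%N -> nth 0 (eulerPolys R n) k = eulerPoly R k.
Proof.
elim: n => [|n IH]; first by rewrite leqn0 => /eqP ->.
rewrite leq_eqVlt => /orP[/eqP -> //|ltkn].
by rewrite /= nth_rcons size_eulerPolys ltkn IH.
Qed.

Lemma eulerPoly_deriv_poly (R : comNzRingType) n :
  eulerPoly R n = euler_deriv_poly R n.
Proof.
elim/ltn_ind: n => -[//|n] IH.
apply: (monic_lreg (monicXsubC 1)).
have := binom_transform_euler_deriv_poly R n.
rewrite /binom_transform big_ord_recr /= subnn expr0 binn expr1n !scale1r mulr1.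
move/(canRL (addrK _)) => sumE.
rewrite polyC1 [RHS]mulrBl [in RHS]mul1r -sumE /eulerPoly /=.
rewrite nth_rcons size_eulerPolys ltnn eqxx mulr_sumr.
apply: eq_bigr => -[k ltkn] _ /=.
rewrite nth_eulerPolys // IH // subSn // exprS expr1n !scale1r scaler_nat.
by rewrite polyC1; ring.
Qed.

Lemma eulerPoly_rec (R : comNzRingType) : euler_recurrence (eulerPoly R).
Proof. by move=> j; rewrite !eulerPoly_deriv_poly. Qed.

Section GeneralEuler.
Variables (R : comNzRingType) (a d : R).

Lemma genEuler_ge n (k : int) : n%:Z <= k -> genEuler a d n k = 0.
Proof. by case: n => [|n] /=; case: ifP => //; lia. Qed.

Lemma genEuler_le n (k : int) : k <= -2 -> genEuler a d n k = 0.
Proof. by case: n => [|n] /=; case: ifP => //; lia. Qed.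

Lemma genEulerS n (k : int) :
  genEuler a d n.+1 k =
  (- a + (k + 2)%:~R * d) * genEuler a d n k
  + (a + (n.+1%:Z - k - 1)%:~R * d) * genEuler a d n (k - 1).
Proof.
rewrite /=; case: ifP => // k_out.
have [k_lo | k_hi] : k <= -2 \/ n%:Z + 1 <= k by lia.
  by rewrite !genEuler_le ?mulr0 ?addr0 //; lia.
by rewrite !genEuler_ge ?mulr0 ?addr0 //; lia.
Qed.

Lemma coef_genEulerPoly n m :
  (genEulerPoly a d n)`_m = genEuler a d n (m%:Z - 1).
Proof.
rewrite /genEulerPoly -(poly_def n.+1 (fun m : nat => genEuler a d n (m%:Z - 1))).
by rewrite coef_poly; case: ltnP => // lenm; rewrite genEuler_ge //; lia.
Qed.

Lemma genEulerPoly_rec n :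
  genEulerPoly a d n.+1 =
  (a *: 'X - a%:P + d%:P + (n%:R * d) *: 'X) * genEulerPoly a d n
  + d *: ('X * (1 - 'X) * (genEulerPoly a d n)^`()).
Proof.
set T := genEulerPoly a d n.
have -> : (a *: 'X - a%:P + d%:P + (n%:R * d) *: 'X) * T
          + d *: ('X * (1 - 'X) * T^`())
        = (d - a) *: T + 'X * ((a + n%:R * d) *: T)
          + d *: ('X * T^`()) - d *: ('X * ('X * T^`())).
  by rewrite -!mul_polyC rmorphB rmorphD rmorphM /=; ring.
apply/polyP => -[|m];
  rewrite !(coefB, coefD, coefZ, coef_mulX_deriv, coefXM) /= !coef_genEulerPoly genEulerS.
  by rewrite [genEuler _ _ _ (_ - 1 - 1)]genEuler_le //; ring.
have -> : m.+1%:Z - 1 = m by lia.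
by ring.
Qed.

End GeneralEuler.

Lemma genEulerPoly_binom_transform (R : comNzRingType) (a d : R) n :
  genEulerPoly a d n = binom_transform a d (eulerPoly R) n.
Proof.
elim: n => [|n IH]; first by rewrite binom_transform0 /genEulerPoly big_ord1 scale1r.
by rewrite genEulerPoly_rec binom_transform_rec ?IH //; apply: eulerPoly_rec.
Qed.

Theorem lemma3p2 (R : realType) (a d : R) (n : nat) :
  genEulerPoly a d n =
  \sum_(j < n.+1) ('C(n, j))%:R *: (d ^+ j *: (eulerPoly R j * (a *: 'X - a%:P) ^+ (n - j))).
Proof. exact: genEulerPoly_binom_transform. Qed.
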